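(* In the setting of the context, the enclosure $W_\Omega(T)\subset\overline{\mathbb{C}}$ has the following properties: (i) $W_\Omega(T)$ is symmetric with respect to the imaginary axis; (ii) $0\in W_\Omega(T)$ if and only if $0\in\overline{W(A)}$ or $c=0$; (iii) $\delta_+\in W_\Omega(T)$ if and only if $W(A)$ is unbounded or $0\in\overline{W(B)}$ or $c=0$; (iv) $\delta_-\in W_\Omega(T)$ if and only if $W(A)$ is unbounded or $0\in\overline{W(B)}$; (v) $\infty\in W_\Omega(T)$ if and only if $W(A)$ is unbounded.
   Context: Let $\mathcal{H}$ be a Hilbert space, $A$ a selfadjoint (possibly unbounded) operator in $\mathcal{H}$ and $B$ a nonzero bounded selfadjoint operator. Let $c\ge0$, $d>0$, $\theta:=\sqrt{c-d^2/4}$ (principal square root), $\delta_\pm:=\pm\theta-id/2$. $W(A),W(B)\subset\mathbb{R}$ are the numerical ranges. For real $\alpha,\beta$ let $p_{(\alpha,\beta)}(\omega):=(\alpha-\omega^2)(c-id\omega-\omega^2)-\beta\omega^2$, with roots $r_1,\dots,r_4$ labelled continuously in $(\alpha,\beta)\in\mathbb{R}^2$ and extended by limits to $\overline{\mathbb{R}}\times\mathbb{R}$ ($\overline{\mathbb{R}}=\mathbb{R}\cup\{\pm\infty\}$), with values in the Riemann sphere $\overline{\mathbb{C}}$. Let $\Omega:=\overline{W(A)}\times\overline{W(B)}$ (closure of $W(A)$ in $\overline{\mathbb{R}}$) and $W_\Omega(T):=\bigcup_{n=1}^4\bigcup_{(\alpha,\beta)\in\Omega}r_n(\alpha,\beta)$.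 *)

From HB Require Import structures.
From mathcomp Require Import all_boot all_order all_algebra.
From mathcomp Require Import all_classical all_reals all_analysis.
From mathcomp Require Import complex.

Set Implicit Arguments.
Unset Strict Implicit.
Unset Printing Implicit Defensive.

Import Order.TTheory GRing.Theory Num.Theory.
Import numFieldNormedType.Exports.
Local Open Scope classical_set_scope.
Local Open Scope ring_scope.
Local Open Scope complex_scope.

Record hilbert (R : realType) := Hilbert {
  hcar :> lmodType R[i];
  inner : hcar -> hcar -> R[i];
  inner_linear_l : forall (a : R[i]) (x y z : hcar),
      inner (a *: x + y) z = a * inner x z + inner y z;
  inner_conj_sym : forall x y : hcar, inner y x = (inner x y)^*;
  inner_ge0 : forall x : hcar, 0 <= inner x x;
  inner_eq0 : forall x : hcar, inner x x = 0 -> x = 0;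
  inner_complete : forall u : nat -> hcar,
      (forall e : R, 0 < e -> exists N : nat, forall m n : nat,
          (N <= m)%N -> (N <= n)%N ->
          Num.sqrt (complex.Re (inner (u m - u n) (u m - u n))) < e) ->
      exists l : hcar, forall e : R, 0 < e -> exists N : nat, forall n : nat,
          (N <= n)%N -> Num.sqrt (complex.Re (inner (u n - l) (u n - l))) < e
}.

Section Operators.
Variables (R : realType) (H : hilbert R).

Definition hnorm (x : H) : R := Num.sqrt (complex.Re (inner x x)).

(* A (possibly unbounded) linear operator A with domain D is selfadjoint:
   D is a dense linear subspace, A is linear on D, and A^* = A as graphs:
   y is in dom(A^* ) with A^* y = z  iff  y is in D and A y = z. *)
Definition selfadjoint (D : set H) (A : H -> H) : Prop :=
  [/\ D 0,
      (forall (a : R[i]) x y, D x -> D y -> D (a *: x + y)),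
      (forall (a : R[i]) x y, D x -> D y -> A (a *: x + y) = a *: A x + A y),
      (forall (x : H) (e : R), 0 < e -> exists y, D y /\ hnorm (x - y) < e) &
      (forall y z : H, (forall x, D x -> inner (A x) y = inner x z) <->
                       (D y /\ A y = z))].

Definition bounded_selfadjoint (B : H -> H) : Prop :=
  [/\ (forall (a : R[i]) x y, B (a *: x + y) = a *: B x + B y),
      (exists M : R, forall x, hnorm (B x) <= M * hnorm x) &
      (forall x y, inner (B x) y = inner x (B y))].

(* Numerical range W(A) = { <Ax,x> : x in dom A, ||x|| = 1 }, a subset of R
   (for a selfadjoint operator). *)
Definition numrange (D : set H) (A : H -> H) : set R :=
  [set r : R | exists x, D x /\ inner x x = 1 /\ inner (A x) x = r%:C].

End Operators.

Section Enclosure.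
Variable R : realType.

Definition pab (c d alpha beta : R) (w : R[i]) : R[i] :=
  (alpha%:C - w ^+ 2) * (c%:C - 'i * d%:C * w - w ^+ 2) - beta%:C * w ^+ 2.

Definition theta (c d : R) : R[i] := sqrtC ((c - d ^+ 2 / 4)%:C).
Definition delta_plus (c d : R) : R[i] := theta c d - 'i * (d / 2)%:C.
Definition delta_minus (c d : R) : R[i] := - theta c d - 'i * (d / 2)%:C.

(* Riemann sphere: [option R[i]], with [None] the point at infinity.
   Convergence of a complex sequence in the Riemann sphere. *)
Definition cvg_sphere (z : nat -> R[i]) (w : option R[i]) : Prop :=
  match w with
  | Some w0 => forall e : R, 0 < e -> exists N : nat,
      forall k : nat, (N <= k)%N -> `|z k - w0| < e%:C
  | None => forall M : R, exists N : nat,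
      forall k : nat, (N <= k)%N -> M%:C < `|z k|
  end.

(* W_Omega(T), with Omega = closure_{Rbar}(W(A)) x closure(W(B)):
   for finite alpha, the roots of p_(alpha,beta); for alpha = +-oo, the
   limits (in the Riemann sphere) of roots of p_(alpha_k,beta) as the real
   alpha_k tend to alpha. *)
Definition WOmega (c d : R) (WA WB : set R) : set (option R[i]) :=
  [set z | exists (a : \bar R) (b : R),
     closure (EFin @` WA) a /\ closure WB b /\
     match a with
     | EFin r => exists w, z = Some w /\ pab c d r b w = 0
     | _ => exists (al : nat -> R) (zs : nat -> R[i]),
              ((fun k => (al k)%:E) @ \oo --> a) /\
              (forall k, pab c d (al k) b (zs k) = 0) /\ cvg_sphere zs z
     end].

Definition unbounded_set (S : set R) : Prop :=
  ~ (exists M : R, forall r, S r -> `|r| <= M).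

End Enclosure.

(* Since p_(al,b)(-conj w) = conj (p_(al,b)(w)), the enclosure is symmetric.
   Finite points (al, b) of Omega contribute the roots of p_(al,b), where
   p_(al,b)(0) = al c and p_(al,b)(delta) = -b delta^2 at the roots delta of
   c - i d w - w^2. Infinite points contribute the limits of roots of
   p_(al_k,b) with |al_k| -> oo. Written as a monic quartic in w, or in
   w - delta, p_(al,b) has a w^2-coefficient that grows like |al| and is the sum
   of the pairwise products of the roots. Hence some root has modulus about
   sqrt (|al| / 6) or more, so oo is such a limit; and since in w - delta the
   constant term, the product of the roots, stays bounded, some root tends to
   delta. Conversely, for c > 0 a root near 0 forces |al| <= 2 |b| / c + 1, so
   0 is not such a limit. *)

From HB Require Import structures.
From mathcomp Require Import all_boot all_order all_algebra.
From mathcomp Require Import all_classical all_reals all_analysis.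
From mathcomp Require Import complex.
From mathcomp Require Import ring lra.
Import Order.TTheory GRing.Theory Num.Theory.
Import numFieldNormedType.Exports.
Local Open Scope classical_set_scope.
Local Open Scope ring_scope.
Local Open Scope complex_scope.

Section MonicQuartic.
Context {F : closedFieldType}.

Lemma monic_quartic_vieta (a3 a2 a1 a0 : F) : exists s1 s2 s3 s4 : F,
  [/\ forall h, h ^+ 4 + a3 * h ^+ 3 + a2 * h ^+ 2 + a1 * h + a0
                = (h - s1) * (h - s2) * (h - s3) * (h - s4),
      a2 = s1 * s2 + s1 * s3 + s1 * s4 + s2 * s3 + s2 * s4 + s3 * s4 &
      a0 = s1 * s2 * s3 * s4].
Proof.
(* Peel off one root at a time: s2 is a root of the cubic quotient by h - s1,
   s3 one of the quadratic quotient by h - s2. *)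
have [s1] := @solve_monicpoly F 4 (nth 0 [:: -a0; -a1; -a2; -a3]) isT.
rewrite !big_ord_recr big_ord0 /= => h1.
have [s2] := @solve_monicpoly F 3
  (nth 0 [:: -(a1 + s1 * (a2 + s1 * (a3 + s1))); -(a2 + s1 * (a3 + s1)); -(a3 + s1)]) isT.
rewrite !big_ord_recr big_ord0 /= => h2.
have [s3] := @solve_monicpoly F 2
  (nth 0 [:: -(a2 + s1 * (a3 + s1) + s2 * (a3 + s1 + s2)); -(a3 + s1 + s2)]) isT.
rewrite !big_ord_recr big_ord0 /= => h3.
have -> : a0 = - (s1 ^+ 4 + a3 * s1 ^+ 3 + a2 * s1 ^+ 2 + a1 * s1).
  by apply/eqP; rewrite -subr_eq0 h1; apply/eqP; ring.
have -> : a1 = - (s2 ^+ 3 + (a3 + s1) * s2 ^+ 2 + (a2 + s1 * (a3 + s1)) * s2)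
               - s1 * (a2 + s1 * (a3 + s1)).
  by apply/eqP; rewrite -subr_eq0 h2; apply/eqP; ring.
have -> : a2 = - (s3 ^+ 2 + (a3 + s1 + s2) * s3) - s1 * (a3 + s1) - s2 * (a3 + s1 + s2).
  by apply/eqP; rewrite -subr_eq0 h3; apply/eqP; ring.
by exists s1, s2, s3, (- (a3 + s1 + s2 + s3)); split => [h||]; ring.
Qed.

End MonicQuartic.

Section ComplexQuarticRoots.
Context {R : rcfType}.
Local Notation normc := (@Normc.normc R).

Lemma normc_ge0 (z : R[i]) : 0 <= normc z.
Proof. by case: z => a b; rewrite /= sqrtr_ge0. Qed.

Lemma normc_real (x : R) : normc x%:C = `|x|.
Proof. by rewrite /= expr0n /= addr0 sqrtr_sqr. Qed.

Lemma normc_complexE (z : R[i]) : `|z| = (normc z)%:C.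
Proof. by case: z. Qed.

Lemma lerB_normc (x y : R[i]) : normc x - normc y <= normc (x - y).
Proof. exact: (@lerB_dist _ (Rcomplex R)). Qed.

Lemma normc_e2_le (s1 s2 s3 s4 : R[i]) :
  normc (s1 * s2 + s1 * s3 + s1 * s4 + s2 * s3 + s2 * s4 + s3 * s4) <=
  normc s1 * normc s2 + normc s1 * normc s3 + normc s1 * normc s4 +
  normc s2 * normc s3 + normc s2 * normc s4 + normc s3 * normc s4.
Proof.
rewrite -!Normc.normcM.
by do 5 (apply: le_trans (le_normcD _ _) _; rewrite lerD2r).
Qed.

Lemma quartic_small_root (a3 a2 a1 a0 : R[i]) (eps : R) : 0 < eps ->
  6%:R * normc a0 < eps ^+ 2 * normc a2 ->
  exists h, h ^+ 4 + a3 * h ^+ 3 + a2 * h ^+ 2 + a1 * h + a0 = 0 /\ normc h < eps.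
Proof.
move=> eps_gt0 a_ineq.
have [s1 [s2 [s3 [s4 [factorE a2E a0E]]]]] := monic_quartic_vieta a3 a2 a1 a0.
have [/and5P[g1 g2 g3 g4 _]|/allPn [s s_root s_small]] :=
  boolP (all (fun s => eps <= normc s) [:: s1; s2; s3; s4]); last first.
  exists s; split; last by rewrite ltNge.
  by rewrite factorE; move: s_root; rewrite !inE => /or4P[] /eqP ->;
    rewrite subrr !(mul0r, mulr0).
exfalso.
(* If every root has modulus at least eps, each product of two roots is at
   most the product of all four divided by eps^2. *)
have pair_le x y u v : 0 <= x -> 0 <= y -> eps <= u -> eps <= v ->
    eps ^+ 2 * (x * y) <= x * y * (u * v).
  move=> *; rewrite mulrC ler_wpM2l ?mulr_ge0 // expr2 ler_pM //; lra.
have := ler_wpM2l (ltW (exprn_gt0 2 eps_gt0)) (normc_e2_le s1 s2 s3 s4).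
move: (normc_ge0 s1) (normc_ge0 s2) (normc_ge0 s3) (normc_ge0 s4) => h1 h2 h3 h4.
have := pair_le _ _ _ _ h1 h2 g3 g4; have := pair_le _ _ _ _ h1 h3 g2 g4.
have := pair_le _ _ _ _ h1 h4 g2 g3; have := pair_le _ _ _ _ h2 h3 g1 g4.
have := pair_le _ _ _ _ h2 h4 g1 g3; have := pair_le _ _ _ _ h3 h4 g1 g2.
move: a_ineq; rewrite a2E a0E !Normc.normcM; nra.
Qed.

Lemma quartic_large_root (a3 a2 a1 a0 : R[i]) (M : R) :
  6%:R * M ^+ 2 < normc a2 ->
  exists h, h ^+ 4 + a3 * h ^+ 3 + a2 * h ^+ 2 + a1 * h + a0 = 0 /\ M < normc h.
Proof.
move=> a_ineq.
have [s1 [s2 [s3 [s4 [factorE a2E _]]]]] := monic_quartic_vieta a3 a2 a1 a0.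
have [/and5P[g1 g2 g3 g4 _]|/allPn [s s_root s_large]] :=
  boolP (all (fun s => normc s <= M) [:: s1; s2; s3; s4]); last first.
  exists s; split; last by rewrite ltNge.
  by rewrite factorE; move: s_root; rewrite !inE => /or4P[] /eqP ->;
    rewrite subrr !(mul0r, mulr0).
exfalso.
have pair_le x y : 0 <= x -> 0 <= y -> x <= M -> y <= M -> x * y <= M ^+ 2.
  by move=> *; rewrite expr2 ler_pM.
have := normc_e2_le s1 s2 s3 s4.
move: (normc_ge0 s1) (normc_ge0 s2) (normc_ge0 s3) (normc_ge0 s4) => h1 h2 h3 h4.
have := pair_le _ _ h1 h2 g1 g2; have := pair_le _ _ h1 h3 g1 g3.
have := pair_le _ _ h1 h4 g1 g4; have := pair_le _ _ h2 h3 g2 g3.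
have := pair_le _ _ h2 h4 g2 g4; have := pair_le _ _ h3 h4 g3 g4.
move: a_ineq; rewrite a2E; lra.
Qed.

End ComplexQuarticRoots.

Section Pab.
Context {R : realType} (c d : R).
Local Notation normc := (@Normc.normc R).
Local Notation pab := (pab c d).

(* [pab c d al b w = (al - w^2) * qcd w - b * w^2], and delta_plus, delta_minus
   are the two roots of qcd. *)
Definition qcd (w : R[i]) : R[i] := c%:C - 'i * d%:C * w - w ^+ 2.

Lemma pab_qcd_root (al b : R) (dl : R[i]) :
  qcd dl = 0 -> pab al b dl = - (b%:C * dl ^+ 2).
Proof. by move=> q_dl; rewrite /pab -/(qcd dl) q_dl mulr0 sub0r. Qed.

Lemma pab_root_near (b : R) (dl : R[i]) (eps : R) : 0 < eps -> qcd dl = 0 ->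
  exists L, forall al : R, L < `|al| ->
    exists w, pab al b w = 0 /\ normc (w - dl) < eps.
Proof.
move=> eps_gt0 q_dl.
pose K := 6%:R * dl ^+ 2 + 3%:R * 'i * d%:C * dl - c%:C - b%:C.
exists (normc K + 6%:R * normc (b%:C * dl ^+ 2) / eps ^+ 2) => al al_large.
have [|h [h_root h_small]] := quartic_small_root (4%:R * dl + 'i * d%:C)
  (K - al%:C)
  (4%:R * dl ^+ 3 + 3%:R * 'i * d%:C * dl ^+ 2 - 2%:R * (al + c + b)%:C * dl
   - 'i * d%:C * al%:C)
  (- (b%:C * dl ^+ 2)) _ eps_gt0.
  have eps2_gt0 : 0 < eps ^+ 2 by exact: exprn_gt0.
  have : `|al| - normc K <= normc (K - al%:C).
    by rewrite -[normc (K - _)]normcN opprB -normc_real; apply: lerB_normc.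
  by move: al_large; rewrite normcN -ltrBrDl ltr_pdivrMr //; nra.
exists (dl + h); split; last by rewrite addrC addKr.
rewrite -h_root -(pab_qcd_root al b _ q_dl) /pab /K; ring.
Qed.

Lemma pab_root_far (b M : R) :
  exists L, forall al : R, L < `|al| -> exists w, pab al b w = 0 /\ M < normc w.
Proof.
exists (6%:R * M ^+ 2 + `|c + b|) => al al_large.
have [|w [w_root w_large]] := quartic_large_root ('i * d%:C) (- (al + c + b)%:C)
  (- ('i * d%:C * al%:C)) (al * c)%:C M.
  have := lerB_dist al (- (c + b)); rewrite opprK normrN.
  by rewrite normcN normc_real -addrA; lra.
by exists w; split; rewrite // -w_root /pab; ring.
Qed.

Lemma pab_conj (al b : R) (w : R[i]) : pab al b (- w^*) = (pab al b w)^*.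
Proof.
case: w => x y; rewrite /pab !expr2 /=.
by apply/eqP; rewrite eq_complex /=; apply/andP; split; apply/eqP; ring.
Qed.

(* The factor qcd z stays above c / 2, hence |al - z^2| <= 2 |b| / c. *)
Lemma pab_small_root_bound (al b : R) (z : R[i]) : 0 < c ->
  normc z <= 1 -> (`|d| + 1) * normc z <= c / 2%:R ->
  pab al b z = 0 -> `|al| <= 2%:R * `|b| / c + 1.
Proof.
move=> c_gt0 z_le1 z_small root.
have z_ge0 := normc_ge0 z.
have zz_le : normc z * normc z <= normc z by rewrite ler_piMr.
have qcd_ge : c / 2%:R <= normc (qcd z).
  have -> : qcd z = c%:C - ('i * d%:C * z + z * z) by rewrite /qcd; ring.
  have normc_i : normc 'i = 1 by rewrite /= expr0n expr1n add0r sqrtr1.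
  have := lerB_normc c%:C ('i * d%:C * z + z * z).
  have := le_normcD ('i * d%:C * z) (z * z).
  rewrite !Normc.normcM normc_i !normc_real mul1r [`|c|]ger0_norm ?(ltW c_gt0) //.
  lra.
have E : normc (al%:C - z * z) * normc (qcd z) = `|b| * (normc z * normc z).
  rewrite -normc_real -!Normc.normcM -expr2; congr normc.
  by move/eqP: root; rewrite /pab subr_eq0 => /eqP.
have : normc (al%:C - z * z) <= 2%:R * `|b| / c.
  have := ler_wpM2l (normc_ge0 (al%:C - z * z)) qcd_ge.
  have : `|b| * (normc z * normc z) <= `|b| by rewrite ler_piMr ?normr_ge0 //; lra.
  rewrite ler_pdivlMr //; lra.
have := lerB_normc al%:C (z * z); rewrite normc_real Normc.normcM.
lra.
Qed.

Lemma theta_sqr : theta c d ^+ 2 = c%:C - (d / 2)%:C ^+ 2.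
Proof.
rewrite /theta sqrtCK (_ : d ^+ 2 / 4 = (d / 2) ^+ 2); last by field.
by rewrite rmorphB rmorphXn.
Qed.

Lemma qcd_pm_theta (t : R[i]) : t ^+ 2 = theta c d ^+ 2 ->
  qcd (t - 'i * (d / 2)%:C) = 0.
Proof.
move=> t_sqr; rewrite /qcd {1}(_ : d = 2%:R * (d / 2)); last by field.
rewrite rmorphM rmorph_nat; set D := (d / 2)%:C.
transitivity (c%:C - t ^+ 2 - D ^+ 2 + ('i ^+ 2 + 1) * D ^+ 2); first by ring.
by rewrite sqr_i t_sqr theta_sqr -/D; ring.
Qed.

Lemma qcd_delta_plus : qcd (delta_plus c d) = 0.
Proof. exact: qcd_pm_theta. Qed.

Lemma qcd_delta_minus : qcd (delta_minus c d) = 0.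
Proof. by apply: qcd_pm_theta; rewrite sqrrN. Qed.

(* theta is a principal square root, so its imaginary part is nonnegative. *)
Lemma theta_neq_Ni : 0 < d -> theta c d != - ('i * (d / 2)%:C).
Proof.
move=> d_gt0; apply/eqP => theta_E.
have := @Im_rootC_ge0 _ 2 ((c - d ^+ 2 / 4)%:C) isT.
rewrite -/(sqrtC _) -/(theta c d) theta_E -complexIm /= ler0c; lra.
Qed.

Lemma delta_minus_neq0 : 0 < d -> delta_minus c d != 0.
Proof.
by move=> /theta_neq_Ni; apply: contra; rewrite /delta_minus subr_eq0 eqr_oppLR.
Qed.

Lemma delta_plus_eq0 : 0 < d -> (delta_plus c d = 0 <-> c = 0).
Proof.
move=> d_gt0; rewrite /delta_plus; split => [/eqP|c0].
  rewrite subr_eq0 => /eqP theta_E.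
  have := theta_sqr; rewrite theta_E exprMn sqr_i => /eqP.
  rewrite -subr_eq0 => /eqP E.
  have : c%:C = 0 :> R[i] by rewrite -oppr0 -E; ring.
  by case.
have : (theta c d - 'i * (d / 2)%:C) * (theta c d + 'i * (d / 2)%:C) = 0.
  rewrite -subr_sqr exprMn sqr_i theta_sqr c0; ring.
move/eqP; rewrite mulf_eq0 => /orP[/eqP //|].
by rewrite addr_eq0 (negPf (theta_neq_Ni d_gt0)).
Qed.

End Pab.

Section ExtendedLimits.
Context {R : realType}.

Lemma closure_EFin_pinftyP (S : set R) :
  closure (EFin @` S) +oo%E <-> forall M, exists2 r, S r & M < r.
Proof.
split=> [S_cl M|S_unb U [M [_ MU]]].
  have [_ [[r Sr <-] /= Mr]] := S_cl _ (nbhs_open_ereal_pinfty M).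
  by exists r; rewrite // -lte_fin.
have [r Sr Mr] := S_unb M.
by exists r%:E; split; [exists r | apply: MU; rewrite lte_fin].
Qed.

Lemma closure_EFin_ninftyP (S : set R) :
  closure (EFin @` S) -oo%E <-> forall M, exists2 r, S r & r < M.
Proof.
split=> [S_cl M|S_unb U [M [_ MU]]].
  have [_ [[r Sr <-] /= rM]] := S_cl _ (nbhs_open_ereal_ninfty M).
  by exists r; rewrite // -lte_fin.
have [r Sr rM] := S_unb M.
by exists r%:E; split; [exists r | apply: MU; rewrite lte_fin].
Qed.

Lemma unbounded_setP (S : set R) : unbounded_set S <->
  closure (EFin @` S) +oo%E \/ closure (EFin @` S) -oo%E.
Proof.
rewrite closure_EFin_pinftyP closure_EFin_ninftyP; split; last first.
  move=> S_unb [M S_bnd]; case: S_unb => [/(_ M)|/(_ (- M))] [r Sr].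
    by have := S_bnd r Sr; have := ler_norm r; lra.
  by have := S_bnd r Sr; have := ler_norm (- r); rewrite normrN; lra.
move=> S_unb; apply: contrapT => /not_orP[/existsNP[M1 S_le] /existsNP[M2 S_ge]].
apply: S_unb; exists (`|M1| + `|M2|) => r Sr.
have r_le : r <= M1 by rewrite leNgt; apply/negP => Mr; apply: S_le; exists r.
have r_ge : M2 <= r by rewrite leNgt; apply/negP => rM; apply: S_ge; exists r.
have := ler_norm M1; have := ler_norm (- M2); rewrite normrN.
have := normr_ge0 M1; have := normr_ge0 M2 => *.
by rewrite ler_norml; apply/andP; split; lra.
Qed.

Lemma EFin_cvg_infty_norm (al : nat -> R) (a : \bar R) :
  a = +oo%E \/ a = -oo%E -> (fun k => (al k)%:E) @ \oo --> a ->
  forall K, \forall k \near \oo, K < `|al k|.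
Proof.
move=> [->|->] al_cvg K.
  apply: filterS (cvgey_gt al_cvg K) => k; rewrite lte_fin => /lt_le_trans.
  by apply; exact: ler_norm.
apply: filterS (cvgeNy_lt al_cvg (- K)) => k; rewrite lte_fin => alK.
by have := ler_norm (- al k); rewrite normrN; lra.
Qed.

Lemma seq_to_infty (a : \bar R) (P : nat -> R -> Prop) :
  a = +oo%E \/ a = -oo%E ->
  (forall k, exists L, forall x : R, L < `|x| -> P k x) ->
  exists al : nat -> R, (fun k => (al k)%:E) @ \oo --> a /\ forall k, P k (al k).
Proof.
move=> a_infty P_large.
have [s [s_norm s_sqr s_cvg]] : exists s : R, [/\ `|s| = 1, s * s = 1 &
    forall al : nat -> R, (forall k, k%:R <= s * al k) ->
      (fun k => (al k)%:E) @ \oo --> a].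
  case: a_infty => ->; [exists 1 | exists (-1)];
    rewrite ?normrN normr1 ?mulrNN mulr1; split => // al al_ge.
    apply/cvgeyPge => A; apply: filterS (nbhs_infty_ger A) => k Ak.
    by rewrite lee_fin (le_trans Ak) // -[al k]mul1r.
  apply/cvgeNyPle => A; apply: filterS (nbhs_infty_ger (- A)) => k Ak.
  by rewrite lee_fin; have := al_ge k; rewrite mulN1r; lra.
have : forall k, exists x, P k x /\ k%:R <= s * x.
  move=> k; have [L PL] := P_large k.
  have L_ge0 := normr_ge0 L; have k_ge0 : 0 <= k%:R :> R by [].
  exists (s * (`|L| + k%:R + 1)); split; last by rewrite mulrA s_sqr mul1r; lra.
  by apply: PL; rewrite normrM s_norm mul1r ger0_norm; have := ler_norm L; lra.
case/choice => al al_spec.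
by exists al; split => [|k]; [apply: s_cvg => k | ]; case: (al_spec k).
Qed.

End ExtendedLimits.

Section RiemannSphere.
Context {R : realType}.
Local Notation normc := (@Normc.normc R).

Lemma cvg_sphere_Some (zs : nat -> R[i]) (w : R[i]) :
  (forall k, normc (zs k - w) < k.+1%:R^-1) -> cvg_sphere zs (Some w).
Proof.
move=> zs_close e e_gt0; exists (Num.truncn e^-1) => k k_ge.
rewrite normc_complexE ltcR; apply: lt_le_trans (zs_close k) _.
rewrite -[X in _ <= X]invrK lef_pV2 ?posrE ?invr_gt0 // ltW //.
by apply: lt_le_trans (truncnS_gt _) _; rewrite ler_nat.
Qed.

Lemma cvg_sphere_None (zs : nat -> R[i]) :
  (forall k, k%:R < normc (zs k)) -> cvg_sphere zs None.
Proof.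
move=> zs_large M; exists (Num.truncn M).+1 => k k_ge.
rewrite normc_complexE ltcR; apply: lt_trans (zs_large k).
by apply: lt_le_trans (truncnS_gt _) _; rewrite ler_nat.
Qed.

Lemma cvg_sphere_Some_near (zs : nat -> R[i]) (w : R[i]) :
  cvg_sphere zs (Some w) -> forall e, 0 < e -> \forall k \near \oo, normc (zs k - w) < e.
Proof.
by move=> zs_cvg e /zs_cvg [N zs_close]; exists N => // k /zs_close;
  rewrite normc_complexE ltcR.
Qed.

Lemma cvg_sphere_conj (zs : nat -> R[i]) (w : R[i]) : cvg_sphere zs (Some w) ->
  cvg_sphere (fun k => - (zs k)^*) (Some (- w^*)).
Proof.
move=> zs_cvg e /zs_cvg [N zs_close]; exists N => k /zs_close.
by rewrite -opprD -rmorphB normrN (normc_complexE (_^*)) normc_complexE;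
  case: (zs k - w) => x y /=; rewrite sqrrN.
Qed.

End RiemannSphere.

Section Enclosure.
Context {R : realType} (c d : R) (WA WB : set R).
Local Notation normc := (@Normc.normc R).
Local Notation W := (WOmega c d WA WB).
Local Notation clA := (closure (EFin @` WA)).

Lemma WOmega_finite {r b : R} {w : R[i]} :
  clA r%:E -> closure WB b -> pab c d r b w = 0 -> W (Some w).
Proof. by move=> r_cl b_cl w_root; exists r%:E, b; do 2 split => //; exists w. Qed.

Lemma WOmega_infinite {b : R} {z : option R[i]} (Q : nat -> R[i] -> Prop) :
  unbounded_set WA -> closure WB b ->
  (forall k, exists L, forall al : R, L < `|al| ->
     exists w, pab c d al b w = 0 /\ Q k w) ->
  (forall zs, (forall k, Q k (zs k)) -> cvg_sphere zs z) -> W z.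
Proof.
move=> /unbounded_setP WA_unb b_cl Q_roots Q_cvg.
have [a [a_cl a_infty]] : exists a, clA a /\ (a = +oo%E \/ a = -oo%E).
  by case: WA_unb => a_cl; [exists +oo%E | exists -oo%E]; split => //; [left|right].
have [al [al_cvg /choice [zs zs_spec]]] := seq_to_infty _ _ a_infty Q_roots.
have zs_root k : pab c d (al k) b (zs k) = 0 by case: (zs_spec k).
have zs_cvg : cvg_sphere zs z by apply: Q_cvg => k; case: (zs_spec k).
by exists a, b; do 2 split => //; case: a_infty a_cl al_cvg => -> _; exists al, zs.
Qed.

Lemma WOmegaP (z : option R[i]) : W z ->
  (exists r b w, [/\ clA r%:E, closure WB b, z = Some w & pab c d r b w = 0]) \/
  (unbounded_set WA /\ exists b (al : nat -> R) zs,
     [/\ forall K, \forall k \near \oo, K < `|al k|,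
         forall k, pab c d (al k) b (zs k) = 0 & cvg_sphere zs z]).
Proof.
case=> [[r| |] [b [a_cl [b_cl]]]].
- by move=> [w [-> w_root]]; left; exists r, b, w; split.
- move=> [al [zs [al_cvg [zs_root zs_cvg]]]]; right; split.
    by apply/unbounded_setP; left.
  by exists b, al, zs; split => //; apply: EFin_cvg_infty_norm al_cvg; left.
- move=> [al [zs [al_cvg [zs_root zs_cvg]]]]; right; split.
    by apply/unbounded_setP; right.
  by exists b, al, zs; split => //; apply: EFin_cvg_infty_norm al_cvg; right.
Qed.

Lemma WOmega_sym_sub (w : R[i]) : W (Some w) -> W (Some (- w^*)).
Proof.
move=> [a [b [a_cl [b_cl w_in]]]]; exists a, b; do 2 split => //.
case: a a_cl w_in => [r _ [_ [[<-] w_root]]|_|_].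
  by exists (- w^*); rewrite pab_conj w_root conjc0.
all: move=> [al [zs [al_cvg [zs_root zs_cvg]]]]; exists al, (fun k => - (zs k)^*).
all: split => //; split=> [k|]; last exact: cvg_sphere_conj.
all: by rewrite pab_conj zs_root conjc0.
Qed.

Lemma WOmega_sym (w : R[i]) : W (Some w) <-> W (Some (- w^*)).
Proof.
have oppJK : - (- w^*)^* = w.
  by case: w => x y; apply/eqP; rewrite eq_complex /= !opprK !eqxx.
by split=> [|/WOmega_sym_sub]; [exact: WOmega_sym_sub | rewrite oppJK].
Qed.

Lemma pab_roots_not_cvg0 {b : R} {al : nat -> R} {zs : nat -> R[i]} : 0 < c ->
  (forall K, \forall k \near \oo, K < `|al k|) ->
  (forall k, pab c d (al k) b (zs k) = 0) -> ~ cvg_sphere zs (Some 0).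
Proof.
move=> c_gt0 al_large zs_root /cvg_sphere_Some_near zs_cvg.
have e_gt0 : 0 < c / 2%:R / (`|d| + 1).
  by rewrite !divr_gt0 // ltr_wpDl.
have [k [al_k [zs_k_le1 zs_k_small]]] := filter_ex (filterI
  (al_large (2%:R * `|b| / c + 1)) (filterI (zs_cvg 1 ltr01) (zs_cvg _ e_gt0))).
rewrite subr0 in zs_k_le1 zs_k_small.
have zs_k_le : (`|d| + 1) * normc (zs k) <= c / 2%:R.
  by rewrite mulrC -ler_pdivlMr ?ltW // ltr_wpDl.
have := @pab_small_root_bound _ c d (al k) b (zs k) c_gt0 (ltW zs_k_le1) zs_k_le.
by rewrite leNgt al_k => /(_ (zs_root k)).
Qed.

Lemma WOmega_zero : 0 <= c -> WA !=set0 -> WB !=set0 ->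
  W (Some 0) <-> clA 0%:E \/ c = 0.
Proof.
move=> c_ge0 [rA WA_rA] [rB WB_rB].
have rA_cl : clA rA%:E by apply: subset_closure; exists rA.
have rB_cl : closure WB rB by exact: subset_closure.
split=> [/WOmegaP[[r [b [w [r_cl _ [<-] w_root]]]]|
          [_ [b [al [zs [al_large zs_root zs_cvg]]]]]]|[zero_cl|c0]].
- have [] : (r * c)%:C = 0 :> R[i] by rewrite -w_root /pab rmorphM; ring.
  move/eqP; rewrite mulf_eq0 => /orP[/eqP r0|/eqP]; last by right.
  by left; rewrite -r0.
- have [c0|c_neq0] := eqVneq c 0; [by right | exfalso].
  have c_gt0 : 0 < c by rewrite lt_def c_neq0.
  exact: (pab_roots_not_cvg0 c_gt0 al_large zs_root zs_cvg).
- by apply: (WOmega_finite zero_cl rB_cl); rewrite /pab rmorph0; ring.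
- by apply: (WOmega_finite rA_cl rB_cl); rewrite /pab c0 rmorph0; ring.
Qed.

Lemma WOmega_qcd_root (dl : R[i]) : qcd c d dl = 0 -> WA !=set0 -> WB !=set0 ->
  W (Some dl) <-> [\/ unbounded_set WA, closure WB 0 | dl = 0].
Proof.
move=> q_dl [rA WA_rA] [rB WB_rB].
have rA_cl : clA rA%:E by apply: subset_closure; exists rA.
have rB_cl : closure WB rB by exact: subset_closure.
split=> [/WOmegaP[[r [b [w [_ b_cl [<-] w_root]]]]|[WA_unb _]]|[WA_unb|zero_cl|dl0]].
- move/eqP: w_root; rewrite pab_qcd_root // oppr_eq0 mulf_eq0 expf_eq0 /=.
  by case/orP => /eqP; [case=> b0; apply: Or32; rewrite -b0 | apply: Or33].
- exact: Or31.
- apply: (WOmega_infinite (fun k w => normc (w - dl) < k.+1%:R^-1) WA_unb rB_cl).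
    by move=> k; apply: pab_root_near; rewrite ?invr_gt0.
  by move=> zs; apply: cvg_sphere_Some.
- apply: (WOmega_finite rA_cl zero_cl).
  by rewrite pab_qcd_root // rmorph0 mul0r oppr0.
- apply: (WOmega_finite rA_cl rB_cl).
  by rewrite pab_qcd_root // dl0 expr0n mulr0 oppr0.
Qed.

Lemma WOmega_delta_plus : 0 < d -> WA !=set0 -> WB !=set0 ->
  W (Some (delta_plus c d)) <-> [\/ unbounded_set WA, closure WB 0 | c = 0].
Proof.
move=> d_gt0 WA_ne WB_ne.
rewrite -(propext (delta_plus_eq0 c d d_gt0)).
exact: WOmega_qcd_root (qcd_delta_plus c d) WA_ne WB_ne.
Qed.

Lemma WOmega_delta_minus : 0 < d -> WA !=set0 -> WB !=set0 ->
  W (Some (delta_minus c d)) <-> unbounded_set WA \/ closure WB 0.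
Proof.
move=> d_gt0 WA_ne WB_ne.
rewrite (propext (WOmega_qcd_root _ (qcd_delta_minus c d) WA_ne WB_ne)).
have /eqP dm_neq0 := delta_minus_neq0 c d d_gt0.
by split=> [[?|?|//]|[?|?]]; [left | right | apply: Or31 | apply: Or32].
Qed.

Lemma WOmega_infty : WB !=set0 -> W None <-> unbounded_set WA.
Proof.
move=> [rB WB_rB]; have rB_cl : closure WB rB by exact: subset_closure.
split=> [/WOmegaP[[r [b [w [_ _ //]]]]|[]//]|WA_unb].
apply: (WOmega_infinite (fun k w => k%:R < normc w) WA_unb rB_cl).
  by move=> k; apply: pab_root_far.
exact: cvg_sphere_None.
Qed.

End Enclosure.

Section NumericalRange.
Context {R : realType} {H : hilbert R}.

Lemma inner0l (z : H) : inner 0 z = 0.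
Proof.
have := inner_linear_l 1 (0 : H) 0 z; rewrite scaler0 addr0 mul1r.
by rewrite -{1}[inner 0 z]addr0 => /addrI <-.
Qed.

Lemma innerZl (a : R[i]) (x z : H) : inner (a *: x) z = a * inner x z.
Proof. by have := inner_linear_l a x 0 z; rewrite addr0 inner0l addr0. Qed.

Lemma innerZr_real (r : R) (x y : H) : inner x (r%:C *: y) = r%:C * inner x y.
Proof.
rewrite inner_conj_sym innerZl [in RHS]inner_conj_sym; case: (inner _ _) => p q.
by apply/eqP; rewrite eq_complex /=; apply/andP; split; apply/eqP; ring.
Qed.

Lemma inner_self_gt0 (x : H) : x != 0 -> exists2 p : R, 0 < p & inner x x = p%:C.
Proof.
move=> x_neq0; have := inner_ge0 x.
have : inner x x != 0 by apply: contra x_neq0 => /eqP /inner_eq0 ->.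
case: (inner x x) => p q; rewrite lecE /= => xx_neq0 /andP[/eqP q0 p_ge0].
exists p; last by rewrite q0.
by rewrite lt_def p_ge0 andbT; apply: contra xx_neq0 => /eqP p0; rewrite p0 q0.
Qed.

Lemma normalize_vector {x : H} : x != 0 ->
  exists r : R, inner (r%:C *: x) (r%:C *: x) = 1.
Proof.
move=> /inner_self_gt0 [p p_gt0 xx_p]; exists (Num.sqrt p)^-1.
rewrite innerZl innerZr_real xx_p mulrA -!rmorphM -expr2 exprVn sqr_sqrtr ?ltW //.
by rewrite mulVf ?gt_eqF.
Qed.

Lemma self_conjugate_real (v : R[i]) : v = v^* -> exists r : R, v = r%:C.
Proof. by case: v => p q [q_opp]; exists p; congr (_ +i* _); lra. Qed.

Lemma numrange_neq0 (D : set H) (T : H -> H) :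
  (exists2 x, D x & x != 0) -> (forall (a : R[i]) x, D x -> D (a *: x)) ->
  (forall x y, D x -> D y -> inner (T x) y = inner x (T y)) ->
  numrange D T !=set0.
Proof.
move=> [x Dx x_neq0] D_scale T_sym.
have [r unit_x] := normalize_vector x_neq0.
set u := r%:C *: x in unit_x *; have Du : D u := D_scale _ _ Dx.
have [t Tu_t] : exists t : R, inner (T u) u = t%:C.
  by apply: self_conjugate_real; rewrite {1}T_sym // -inner_conj_sym.
by exists t, u.
Qed.

Lemma hnorm_gt0 (x : H) : x != 0 -> 0 < hnorm x.
Proof. by move=> /inner_self_gt0 [p p_gt0 xx_p]; rewrite /hnorm xx_p sqrtr_gt0. Qed.

Lemma selfadjoint_numrange_neq0 {D : set H} {A : H -> H} :
  selfadjoint D A -> (exists x : H, x != 0) -> numrange D A !=set0.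
Proof.
move=> [D0 D_lin _ D_dense A_adj] [x /hnorm_gt0 x_gt0].
apply: numrange_neq0.
- have [y [Dy xy_close]] := D_dense x _ x_gt0.
  by exists y => //; apply: contraTneq xy_close => ->; rewrite subr0 ltxx.
- by move=> a y Dy; rewrite -[a *: y]addr0; apply: D_lin.
- by move=> u v Du Dv; have [_ /(_ (conj Dv erefl)) /(_ u Du)] := A_adj v (A v).
Qed.

Lemma bounded_selfadjoint_numrange_neq0 {B : H -> H} :
  bounded_selfadjoint B -> (exists x : H, x != 0) -> numrange [set: H] B !=set0.
Proof. by move=> [_ _ B_sym] [x x_neq0]; apply: numrange_neq0 => //; exists x. Qed.

Lemma bounded_selfadjoint_neq0 {B : H -> H} {x : H} :
  bounded_selfadjoint B -> B x != 0 -> x != 0.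
Proof.
move=> [B_lin _ _]; apply: contra => /eqP ->.
have := B_lin 1 0 0; rewrite scaler0 addr0 scale1r -{1}[B 0]addr0.
by move=> /addrI <-.
Qed.

End NumericalRange.

Theorem proposition2p2 (R : realType) (H : hilbert R)
  (D : set H) (A : H -> H) (B : H -> H) (c d : R) :
  selfadjoint D A -> bounded_selfadjoint B -> (exists x : H, B x != 0) ->
  0 <= c -> 0 < d ->
  let WA := numrange D A in
  let WB := numrange [set: H] B in
  let W := WOmega c d WA WB in
  [/\ (forall w : R[i], W (Some w) <-> W (Some (- w^*))),
      (W (Some 0) <-> closure (EFin @` WA) 0%:E \/ c = 0),
      (W (Some (delta_plus c d)) <->
         [\/ unbounded_set WA, closure WB 0 | c = 0]),
      (W (Some (delta_minus c d)) <-> unbounded_set WA \/ closure WB 0) &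
      (W None <-> unbounded_set WA)].
Proof.
move=> A_sa B_sa [x Bx_neq0] c_ge0 d_gt0 WA WB W.
have H_neq0 : exists x : H, x != 0.
  by exists x; exact: bounded_selfadjoint_neq0 B_sa Bx_neq0.
have WA_neq0 : WA !=set0 := selfadjoint_numrange_neq0 A_sa H_neq0.
have WB_neq0 : WB !=set0 := bounded_selfadjoint_numrange_neq0 B_sa H_neq0.
split.
- exact: WOmega_sym.
- exact: WOmega_zero.
- exact: WOmega_delta_plus.
- exact: WOmega_delta_minus.
- exact: WOmega_infty.
Qed.
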